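(* The metric space $(\mathcal{J},d_{\mathcal{J}})$ is not locally compact.
   Context: An interval partition is a set $\beta$ of disjoint open subintervals (blocks) of some interval $[0,L]$ that cover $[0,L]$ up to a Lebesgue-null set; write $\|\beta\|:=L$, $\mathrm{Leb}(U)$ for the length of a block $U$, and $\mathcal{I}_H$ for the set of interval partitions. A correspondence between $\beta,\gamma\in\mathcal{I}_H$ is a finite sequence $(U_j,V_j)_{j\in[n]}$, $n\ge0$, of pairs in $\beta\times\gamma$ with $(U_j)_j$, $(V_j)_j$ strictly increasing in left-to-right order. $\mathcal{J}$ is the set of pairs $(\eta,f)$ with $\eta\in\mathcal{I}_H$ and $f\colon[0,\infty]\to[0,\infty)$ right-continuous nondecreasing, constant on every block of $\eta$ and on $[\|\eta\|,\infty]$; $f(U)$ denotes its value on block $U$. $d_{\mathcal{J}}((\eta,f),(\beta,g))$ is the infimum over correspondences $(U_j,V_j)_{j\in[n]}$ between $\eta$ and $\beta$ of the maximum of $\sum_{j}|\mathrm{Leb}(U_j)-\mathrm{Leb}(V_j)|+\|\eta\|-\sum_j\mathrm{Leb}(U_j)$, $\sum_{j}|\mathrm{Leb}(U_j)-\mathrm{Leb}(V_j)|+\|\beta\|-\sum_j\mathrm{Leb}(V_j)$, $\sup_j|f(U_j)-g(V_j)|$ and $|f(\infty)-g(\infty)|$. *)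

From HB Require Import structures.
From mathcomp Require Import all_boot all_order all_algebra.
From mathcomp Require Import all_classical all_reals.
From mathcomp Require Import all_analysis.

Set Implicit Arguments.
Unset Strict Implicit.
Unset Printing Implicit Defensive.

Import Order.TTheory GRing.Theory Num.Theory numFieldNormedType.Exports.
Local Open Scope classical_set_scope.
Local Open Scope ring_scope.

Section MetricNotions.
Variables (R : realType) (T : Type) (d : T -> T -> R).

Definition dball (x : T) (r : R) : set T := [set y | d x y < r].

Definition dopen (A : set T) : Prop :=
  forall x, A x -> exists2 r : R, 0 < r & dball x r `<=` A.

Definition dcompact (K : set T) : Prop :=
  forall (I : Type) (G : I -> set T),
    (forall i, dopen (G i)) -> K `<=` \bigcup_(i in [set: I]) G i ->
    exists2 F : set I, finite_set F & K `<=` \bigcup_(i in F) G i.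

Definition dlocally_compact : Prop :=
  forall x : T, exists K : set T,
    dcompact K /\ exists2 r : R, 0 < r & dball x r `<=` K.

End MetricNotions.

Section IntervalPartitions.
Variable R : realType.

Definition blockset (U : R * R) : set R := `]U.1, U.2[.

Definition Leb (U : R * R) : R := U.2 - U.1.

Record IH := MkIH {
  ipL : R;
  blocks : set (R * R);
  ipL_ge0 : 0 <= ipL;
  blocks_sub : forall U, blocks U -> 0 <= U.1 /\ U.1 < U.2 /\ U.2 <= ipL;
  blocks_disj : forall U V, blocks U -> blocks V -> U <> V ->
                  blockset U `&` blockset V = set0;
  blocks_cover : (@lebesgue_measure R).-negligible
                   (`[0, ipL] `\` \bigcup_(U in blocks) blockset U)
}.

(* Elements of J: pairs (eta, f).  f : [0,oo] -> [0,oo) is represented by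
   a function R -> R (its values on [0,oo)); its value at oo is f(||eta||),
   since f is constant on [||eta||, oo].  Values on negative reals are
   normalised to f 0 so that the representation is unique. *)
Record J := MkJ {
  jeta : IH;
  jf : R -> R;
  jf_ge0 : forall x, 0 <= x -> 0 <= jf x;
  jf_nondecr : forall x y, 0 <= x -> x <= y -> jf x <= jf y;
  jf_rcont : forall x : R, 0 <= x -> jf z @[z --> x^'+] --> jf x;
  jf_blocks : forall U, blocks jeta U ->
                forall x y, blockset U x -> blockset U y -> jf x = jf y;
  jf_tail : forall x, ipL jeta <= x -> jf x = jf (ipL jeta);
  jf_neg : forall x, x < 0 -> jf x = jf 0
}.

Definition finf (a : J) : R := jf a (ipL (jeta a)).

(* value of f on a block U (f is constant there): taken at the midpoint *)
Definition fblock (a : J) (U : R * R) : R := jf a ((U.1 + U.2) / 2).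

Definition correspondence (beta gamma : IH) (C : seq ((R * R) * (R * R))) : Prop :=
  (forall p, p \in C -> blocks beta p.1 /\ blocks gamma p.2) /\
  sorted (fun p q => p.1.1 < q.1.1) C /\
  sorted (fun p q => p.2.1 < q.2.1) C.

Definition corr_cost (a b : J) (C : seq ((R * R) * (R * R))) : R :=
  let dis := \sum_(p <- C) `|Leb p.1 - Leb p.2| in
  Num.max (Num.max (dis + ipL (jeta a) - \sum_(p <- C) Leb p.1)
                   (dis + ipL (jeta b) - \sum_(p <- C) Leb p.2))
          (Num.max (\big[Num.max/0]_(p <- C) `|fblock a p.1 - fblock b p.2|)
                   `|finf a - finf b|).

Definition dJ (a b : J) : R :=
  inf [set c | exists2 C, correspondence (jeta a) (jeta b) C & c = corr_cost a b C].

End IntervalPartitions.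

From mathcomp Require Import all_boot all_order all_algebra.
From mathcomp Require Import all_classical all_reals.
From mathcomp Require Import all_analysis.
From mathcomp Require Import lra.

Set Implicit Arguments.
Unset Strict Implicit.
Unset Printing Implicit Defensive.

Import Order.TTheory GRing.Theory Num.Theory numFieldNormedType.Exports.
Local Open Scope classical_set_scope.
Local Open Scope ring_scope.

(* At the empty partition, every d_J-ball of radius r contains, for each n,
   the partition of [0, r/2] into n+1 equal blocks.  A compact neighbourhood K
   would be covered by the nested open sets
   G n = {||eta|| < r/2} U {eta has a block U with ||eta|| < n Leb(U)},
   open because total length and (matched) block lengths move by at most the
   cost of a correspondence; so K lies in a single G n, which misses the
   partition into n+1 blocks. *)

Section MetricCompactness.
Variables (R : realType) (T : Type) (d : T -> T -> R).

Lemma dopenU (A B : set T) : dopen d A -> dopen d B -> dopen d (A `|` B).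
Proof.
by move=> oA oB x [/oA|/oB] [r r0 sub]; exists r => // y /sub; [left|right].
Qed.

Lemma dcompact_nondecreasing_cover (K : set T) (G : nat -> set T) :
  dcompact d K -> (forall n, dopen d (G n)) ->
  {homo G : m n / (m <= n)%N >-> m `<=` n} ->
  K `<=` \bigcup_n G n -> exists n, K `<=` G n.
Proof.
move=> cK oG homoG /(cK _ _ oG) [F /finite_seqP[s ->] KF].
exists (\max_(i <- s) i)%N => x /KF [i si Gix].
apply: homoG Gix; exact: leq_bigmax_seq.
Qed.

End MetricCompactness.

Section IntervalPartitionFacts.
Variable R : realType.
Implicit Types (b : IH R) (U V : R * R).

Lemma Leb_gt0 b U : blocks b U -> 0 < Leb U.
Proof. by move=> /blocks_sub[_ [lt _]]; rewrite subr_gt0. Qed.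

Lemma blocks_ordered b U V : blocks b U -> blocks b V -> U <> V ->
  U.2 <= V.1 \/ V.2 <= U.1.
Proof.
move=> bU bV UV; have [_ [U12 _]] := blocks_sub bU; have [_ [V12 _]] := blocks_sub bV.
case: (leP U.2 V.1) => [|VU]; first by left.
case: (leP V.2 U.1) => [|UV']; first by right.
have /seteqP[+ _] := blocks_disj bU bV UV.
move=> /(_ ((Num.max U.1 V.1 + Num.min U.2 V.2) / 2)) mid; exfalso; apply: mid.
by rewrite /blockset /= !in_itv /=; split; apply/andP; split;
  case: (leP U.1 V.1) => ?; case: (leP U.2 V.2) => ?; lra.
Qed.

Lemma sum_Leb_le_itv b (s : seq (R * R)) lo hi : uniq s ->
  (forall U, U \in s -> [/\ blocks b U, lo <= U.1 & U.2 <= hi]) -> lo <= hi ->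
  \sum_(U <- s) Leb U <= hi - lo.
Proof.
have [n] := ubnP (size s); elim: n s lo hi => // n IHn [|U s] lo hi /=.
  by rewrite big_nil subr_ge0.
rewrite ltnS => sz /andP[Us us] sub lohi.
have [bU loU Uhi] := sub U (mem_head _ _).
have sub_s V : V \in s -> [/\ blocks b V, lo <= V.1 & V.2 <= hi].
  by move=> Vs; apply: sub; rewrite inE Vs orbT.
have size_filter_s (P : pred (R * R)) : (size (seq.filter P s) < n)%N.
  by rewrite size_filter (leq_ltn_trans (count_size _ _)).
have left_sum : \sum_(V <- s | V.2 <= U.1) Leb V <= U.1 - lo.
  rewrite -big_filter; apply: IHn (filter_uniq _ us) _ loU => //.
  by move=> V; rewrite mem_filter => /andP[VU /sub_s[]].
have right_sum : \sum_(V <- s | ~~ (V.2 <= U.1)) Leb V <= hi - U.2.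
  rewrite -big_filter; apply: IHn (filter_uniq _ us) _ Uhi => //.
  move=> V; rewrite mem_filter => /andP[VU /[dup] Vs /sub_s[bV _ Vhi]].
  have UV : U <> V by move=> E; move: Us; rewrite E Vs.
  by split=> //; case: (blocks_ordered bU bV UV) => // VU'; rewrite VU' in VU.
rewrite big_cons (bigID (fun V => V.2 <= U.1)) /=.
move: left_sum right_sum; rewrite /Leb; lra.
Qed.

Lemma sum_Leb_le_ipL b (s : seq (R * R)) : uniq s ->
  (forall U, U \in s -> blocks b U) -> \sum_(U <- s) Leb U <= ipL b.
Proof.
move=> us sb; rewrite -[ipL b]subr0; apply: (@sum_Leb_le_itv b) us _ (ipL_ge0 b).
by move=> U /sb bU; have [? [_ ?]] := blocks_sub bU; split.
Qed.

Lemma exists_block b : 0 < ipL b -> exists U, blocks b U.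
Proof.
move=> L_gt0; apply: contrapT => noU.
have : (@lebesgue_measure R).-negligible `[0, ipL b].
  apply: negligibleS (blocks_cover b) => x x0L; split => // -[U bU _].
  by apply: noU; exists U.
move/negligibleP => /(_ (measurable_itv _)) L_null.
have := lebesgue_measure_itv `[0, ipL b]; rewrite L_null /= lte_fin L_gt0 oppr0 adde0.
by move=> [] /esym/eqP; rewrite gt_eqF.
Qed.

End IntervalPartitionFacts.

Section Correspondences.
Variables (R : realType) (a c : J R).
Local Notation corr := (correspondence (jeta a) (jeta c)).
Local Notation cost := (corr_cost a c).

Lemma correspondence_nil : corr [::].
Proof. by split=> // p; rewrite in_nil. Qed.

Lemma correspondence_uniq_fst C : corr C -> uniq [seq p.1 | p <- C].
Proof.
move=> [_ [sorted1 _]]; apply: (@sorted_uniq _ (fun U V : R * R => U.1 < V.1)).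
- by move=> ? ? ?; exact: lt_trans.
- by move=> ?; exact: ltxx.
- by rewrite sorted_map.
Qed.

Lemma sum_Leb_fst_le C : corr C -> \sum_(p <- C) Leb p.1 <= ipL (jeta a).
Proof.
move=> hC; rewrite -(big_map fst xpredT); apply: sum_Leb_le_ipL.
  exact: correspondence_uniq_fst.
by move=> U /mapP[p pC ->]; case: hC => /(_ p pC)[].
Qed.

Lemma corr_cost_ge0 C : 0 <= cost C.
Proof. by apply: le_trans (normr_ge0 (finf a - finf c)) _; rewrite !le_max lexx !orbT. Qed.

Lemma dJ_le_cost C : corr C -> dJ a c <= cost C.
Proof.
move=> hC; apply: ge_inf; last by exists C.
by exists 0 => _ [C' _ ->]; exact: corr_cost_ge0.
Qed.

Lemma dJ_lt_cost r : dJ a c < r -> exists2 C, corr C & cost C < r.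
Proof.
move=> /inf_lt[|_ [C hC ->] ?]; last by exists C.
by exists (cost [::]), [::]; first exact: correspondence_nil.
Qed.

Lemma dJ_le_max_ipL :
  dJ a c <= Num.max (Num.max (ipL (jeta a)) (ipL (jeta c))) `|finf a - finf c|.
Proof.
apply: le_trans (dJ_le_cost correspondence_nil) _.
by rewrite /corr_cost !big_nil !add0r !subr0 (max_idPr (normr_ge0 _)).
Qed.

Lemma ipL_le_cost C : corr C -> ipL (jeta c) <= cost C + ipL (jeta a).
Proof.
move=> hC; have cost_ge : \sum_(p <- C) `|Leb p.1 - Leb p.2| + ipL (jeta c)
    - \sum_(p <- C) Leb p.2 <= cost C by rewrite /corr_cost !le_max lexx !orbT.
have snd_le : \sum_(p <- C) Leb p.2 <=
    \sum_(p <- C) Leb p.1 + \sum_(p <- C) `|Leb p.1 - Leb p.2|.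
  rewrite -big_split /=; apply: ler_sum => p _.
  by rewrite distrC -lerBlDl ler_norm.
move: (sum_Leb_fst_le hC); lra.
Qed.

Lemma ipL_sub_le_dJ : ipL (jeta c) - ipL (jeta a) <= dJ a c.
Proof.
apply: lb_le_inf; first by exists (cost [::]), [::]; first exact: correspondence_nil.
by move=> _ [C hC ->]; rewrite lerBlDr; exact: ipL_le_cost.
Qed.

(* A block of [a] longer than the cost must be matched: unmatched blocks are
   paid for in full by the first component of the cost. *)
Lemma matched_block_ge C U : corr C -> blocks (jeta a) U -> cost C < Leb U ->
  exists2 V, blocks (jeta c) V & Leb U - cost C <= Leb V.
Proof.
move=> hC bU costU.
have cost_ge : \sum_(p <- C) `|Leb p.1 - Leb p.2| + ipL (jeta a)
    - \sum_(p <- C) Leb p.1 <= cost C by rewrite /corr_cost !le_max lexx.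
have dis_ge0 : 0 <= \sum_(p <- C) `|Leb p.1 - Leb p.2| by apply: sumr_ge0.
have [/mapP[p pC ->]|Unotin] := boolP (U \in [seq p.1 | p <- C]).
  exists p.2; first by case: hC => /(_ p pC)[].
  have := ler_norm (Leb p.1 - Leb p.2).
  have : `|Leb p.1 - Leb p.2| <= \sum_(q <- C) `|Leb q.1 - Leb q.2|.
    by rewrite (big_rem p pC) /= lerDl sumr_ge0.
  move: (sum_Leb_fst_le hC); lra.
have : \sum_(V <- U :: [seq p.1 | p <- C]) Leb V <= ipL (jeta a).
  apply: sum_Leb_le_ipL; first by rewrite /= Unotin correspondence_uniq_fst.
  move=> V; rewrite inE => /orP[/eqP -> //|/mapP[p pC ->]].
  by case: hC => /(_ p pC)[].
rewrite big_cons big_map; lra.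
Qed.

Lemma dJ_block_persists r U : dJ a c < r -> blocks (jeta a) U -> r <= Leb U ->
  exists2 V, blocks (jeta c) V & Leb U - r < Leb V.
Proof.
move=> /dJ_lt_cost[C hC costr] bU rU.
have [|V bV UV] := matched_block_ge hC bU; first exact: lt_le_trans costr rU.
by exists V => //; apply: lt_le_trans UV; rewrite ltrD2l ltrN2.
Qed.

End Correspondences.

Section ShortAndLongBlocks.
Variable R : realType.

Definition short_J (delta : R) : set (J R) := [set b | ipL (jeta b) < delta].

Definition has_long_block (m : nat) : set (J R) :=
  [set b | exists2 U, blocks (jeta b) U & ipL (jeta b) < m%:R * Leb U].

Lemma dopen_short_J delta : dopen (@dJ R) (short_J delta).
Proof.
move=> b bshort; exists (delta - ipL (jeta b)); first by rewrite subr_gt0.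
by move=> w; rewrite /dball /short_J /=; have := ipL_sub_le_dJ b w; lra.
Qed.

Lemma dopen_has_long_block m : dopen (@dJ R) (has_long_block m).
Proof.
move=> b [U bU Ulong]; have U_gt0 := Leb_gt0 bU.
have m1_gt0 : 0 < m%:R + 1 :> R by rewrite ltr_wpDl.
pose r := Num.min (Leb U) ((m%:R * Leb U - ipL (jeta b)) / (m%:R + 1)).
exists r; first by rewrite lt_min U_gt0 divr_gt0 // subr_gt0.
have rU : r <= Leb U by rewrite ge_min lexx.
move=> w bw; have [V bV UV] := dJ_block_persists bw bU rU.
exists V => //; have := ipL_sub_le_dJ b w.
have : r * (m%:R + 1) <= m%:R * Leb U - ipL (jeta b).
  by rewrite -ler_pdivlMr // ge_min lexx orbT.
have := ler_wpM2l (ler0n R m) (ltW UV).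
move: bw; rewrite /dball /=; nra.
Qed.

Lemma has_long_block_nondecreasing :
  {homo has_long_block : m n / (m <= n)%N >-> m `<=` n}.
Proof.
move=> m n mn b [U bU Ulong]; exists U => //; apply: lt_le_trans Ulong _.
by rewrite ler_wpM2r ?ler_nat // ltW // (Leb_gt0 bU).
Qed.

Lemma short_or_long_block delta b :
  0 < delta -> short_J delta b \/ exists m, has_long_block m b.
Proof.
move=> delta_gt0; have [bshort|blong] := ltP (ipL (jeta b)) delta; first by left.
have [U bU] := exists_block (lt_le_trans delta_gt0 blong).
have U_gt0 := Leb_gt0 bU.
right; exists (Num.bound (ipL (jeta b) / Leb U)); exists U => //.
rewrite -ltr_pdivrMr //; apply: archi_boundP.
by rewrite divr_ge0 ?ipL_ge0 ?ltW.
Qed.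

End ShortAndLongBlocks.

Section UniformPartition.
Variables (R : realType) (h : R).
Hypothesis h_gt0 : 0 < h.

Definition uniform_blocks (N : nat) : set (R * R) :=
  [set U | exists2 k, (k < N)%N & U = (k%:R * h, k.+1%:R * h)].

Lemma uniform_blocks_sub N U : uniform_blocks N U ->
  0 <= U.1 /\ U.1 < U.2 /\ U.2 <= N%:R * h.
Proof.
move=> [k kN ->] /=; split; first by rewrite mulr_ge0 // ltW.
by rewrite ltr_pM2r // ler_pM2r // ltr_nat ler_nat.
Qed.

Lemma uniform_blocks_disj N U V : uniform_blocks N U -> uniform_blocks N V ->
  U <> V -> blockset U `&` blockset V = set0.
Proof.
move=> [k _ ->] [j _ ->] UV; apply/seteqP; split => // z /=.
rewrite /blockset /= !in_itv /= => -[/andP[kz zk] /andP[jz zj]].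
have [kj|jk|kj] := ltngtP k j; last by apply: UV; rewrite kj.
- have : k.+1%:R * h <= j%:R * h by rewrite ler_pM2r // ler_nat.
  lra.
- have : j.+1%:R * h <= k%:R * h by rewrite ler_pM2r // ler_nat.
  lra.
Qed.

Lemma uniform_gap_on_grid N z : 0 <= z <= N%:R * h ->
  (forall k, (k < N)%N -> ~ (k%:R * h < z < k.+1%:R * h)) ->
  exists k : nat, z = k%:R * h.
Proof.
elim: N => [|N IHN] /andP[z_ge0 zN] gap.
  by exists 0%N; rewrite mul0r in zN *; apply/eqP; rewrite eq_le zN z_ge0.
have [zleN|zgtN] := leP z (N%:R * h).
  apply: IHN => [|k kN]; first by rewrite z_ge0 zleN.
  by apply: gap; rewrite ltnW.
have [zltN1|zgeN1] := ltP z (N.+1%:R * h).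
  by exfalso; apply: (gap N (ltnSn N)); rewrite zgtN zltN1.
by exists N.+1; apply/eqP; rewrite eq_le zN zgeN1.
Qed.

Lemma uniform_blocks_cover N : (@lebesgue_measure R).-negligible
  (`[0, N%:R * h] `\` \bigcup_(U in uniform_blocks N) blockset U).
Proof.
have grid_null : (@lebesgue_measure R).-negligible (range (fun k : nat => k%:R * h)).
  have grid_countable : countable (range (fun k : nat => k%:R * h)).
    exact: card_le_trans (card_image_le _ _) (countableP _).
  apply/negligibleP; last exact: countable_lebesgue_measure0.
  by apply: countable_measurable => // t; exact: measurable_set1.
apply: negligibleS grid_null => z [/=]; rewrite in_itv /= => z0N gap.
have [k kN zk|k ->] := uniform_gap_on_grid z0N; last by exists k.
apply: gap; exists (k%:R * h, k.+1%:R * h); first by exists k.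
by rewrite /blockset /= in_itv.
Qed.

Definition uniform_IH (N : nat) : IH R :=
  MkIH (mulr_ge0 (ler0n R N) (ltW h_gt0)) (@uniform_blocks_sub N)
    (@uniform_blocks_disj N) (uniform_blocks_cover N).

Lemma uniform_IH_Leb N U : blocks (uniform_IH N) U -> Leb U = h.
Proof. by move=> [k _ ->]; rewrite /Leb /= -natr1 mulrDl mul1r addrAC subrr add0r. Qed.

End UniformPartition.

Definition zero_J (R : realType) (b : IH R) : J R :=
  @MkJ R b (fun=> 0) (fun _ _ => lexx 0) (fun _ _ _ _ => lexx 0)
    (fun _ _ => cvg_cst 0) (fun _ _ _ _ _ _ => erefl) (fun _ _ => erefl)
    (fun _ _ => erefl).

Theorem lemma3p14 (R : realType) : ~ dlocally_compact (@dJ R).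
Proof.
move=> /(_ (zero_J (uniform_IH (@ltr01 R) 0))) [K [cK [r r_gt0 ballK]]].
pose e := r / 2; have e_gt0 : 0 < e by rewrite divr_gt0.
have h_gt0 n : 0 < e / n.+1%:R by rewrite divr_gt0.
pose y n := zero_J (uniform_IH (h_gt0 n) n.+1).
have ipL_y n : ipL (jeta (y n)) = e by rewrite /= mulrC divfK.
have y_in_K n : K (y n).
  apply/ballK/(le_lt_trans (dJ_le_max_ipL _ _)).
  by rewrite ipL_y /finf /= mul0r subrr normr0 !gt_max r_gt0 andbT /e; lra.
pose G n := short_J e `|` has_long_block n.
have y_notin_G n : ~ G n (y n).
  case=> [|[U /uniform_IH_Leb ->]]; rewrite /short_J /=.
  - by rewrite mulrC divfK ?ltxx.
  - by rewrite ltr_pM2r // ltr_nat ltnNge leqnSn.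
have [n KG] : exists n, K `<=` G n.
  apply: dcompact_nondecreasing_cover cK _ _ _ => [k|m k mk|b _].
  - by apply: dopenU; [exact: dopen_short_J|exact: dopen_has_long_block].
  - by apply: setUS; exact: has_long_block_nondecreasing.
  - have [bshort|[m blong]] := short_or_long_block b e_gt0.
      by exists 0%N => //; left.
    by exists m => //; right.
exact: y_notin_G n (KG _ (y_in_K n)).
Qed.
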